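(* Let $\Gamma=(V,m,\tau)$ be a weak $W$-graph and let $A\subseteq\Delta$. Then the subspaces of $\mathbb{C}V$ spanned by $V(A,-)$ and by $V(A,-)\cup V(A,0)$ are stable under $W(A)$.
   Context: $W$ is a Weyl group with a fixed set $\Delta$ of simple roots; for a root $\alpha$, $s_\alpha$ is the reflection in the hyperplane orthogonal to $\alpha$. A weak $W$-graph is a triple $\Gamma=(V,m,\tau)$ where $V$ is a finite set, $m:V\times V\to\mathbb{C}$ is a map, and $\tau$ is a map from $V$ to the power set of $\Delta$, such that the linear maps $s_\alpha:\mathbb{C}V\to\mathbb{C}V$ ($\alpha\in\Delta$) given on basis vectors by $s_\alpha(v)=-v$ if $\alpha\in\tau(v)$ and $s_\alpha(v)=v-\sum_{u\in V,\ \alpha\in\tau(u)} m(u,v)u$ if $\alpha\notin\tau(v)$ define a representation of $W$ on $\mathbb{C}V$. For $A\subseteq\Delta$, $W(A)$ is the subgroup of $W$ generated by $\{s_\alpha:\alpha\in A\}$, and $V(A,-)=\{v\in V: A\subseteq\tau(v)\}$, $V(A,0)=\{v\in V: A\cap\tau(v)\neq\emptyset,\ A\not\subseteq\tau(v)\}$, $V(A,+)=\{v\in V: A\cap\tau(v)=\emptyset\}$. *)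

(* Weyl groups are realised concretely from a (reduced,
   crystallographic) root system in the Euclidean space 'rV[R]_n, R : realType;
   C := R[i] (the complex numbers over the reals R). *)
From HB Require Import structures.
From mathcomp Require Import all_boot all_order all_algebra.
From mathcomp Require Import reals complex.
Set Implicit Arguments. Unset Strict Implicit. Unset Printing Implicit Defensive.
Import Order.TTheory GRing.Theory Num.Theory.
Local Open Scope ring_scope.

Section Defs.
Variable R : realType.
Variable n : nat.

Definition dot (u v : 'rV[R]_n) : R := (u *m v^T) 0 0.

Definition refl (a v : 'rV[R]_n) : 'rV[R]_n :=
  v - ((2 * dot v a) / dot a a) *: a.

(* Its matrix (acting on row vectors: v *m refl_mx a = refl a v). *)
Definition refl_mx (a : 'rV[R]_n) : 'M[R]_n := lin1_mx (refl a).

Definition is_root_system (Phi : seq 'rV[R]_n) : Prop :=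
  [/\ 0 \notin Phi,
      (forall v : 'rV[R]_n, exists c : 'I_(size Phi) -> R,
          v = \sum_(i < size Phi) c i *: Phi`_i),
      (forall a b, a \in Phi -> b \in Phi -> refl a b \in Phi),
      (forall a b, a \in Phi -> b \in Phi ->
          exists z : int, (2 * dot b a) / dot a a = z%:~R) &
      (forall a (c : R), a \in Phi -> c *: a \in Phi -> c = 1 \/ c = -1)].

Definition is_simple_system (Phi : seq 'rV[R]_n) (I : finType)
    (delta : I -> 'rV[R]_n) : Prop :=
  [/\ injective delta,
      (forall i, delta i \in Phi),
      (forall c : I -> R, \sum_i c i *: delta i = 0 -> forall i, c i = 0) &
      (forall b, b \in Phi -> exists c : I -> int,
          b = \sum_i (c i)%:~R *: delta i /\
          ((forall i, (0 <= c i)%R) \/ (forall i, (c i <= 0)%R)))].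

Inductive gen_grp (S : 'M[R]_n -> Prop) : 'M[R]_n -> Prop :=
  | gen_one : gen_grp S 1%:M
  | gen_el g : S g -> gen_grp S g
  | gen_mul g h : gen_grp S g -> gen_grp S h -> gen_grp S (g *m h)
  | gen_inv g : gen_grp S g -> gen_grp S (invmx g).

Definition WA (I : finType) (delta : I -> 'rV[R]_n) (A : {set I}) :=
  gen_grp (fun g => exists2 i, i \in A & g = refl_mx (delta i)).

Definition Wgrp (I : finType) (delta : I -> 'rV[R]_n) := WA delta setT.

End Defs.

Section WGraph.
Variable R : realType.
Local Notation C := (R[i]).
Variable V : finType.

(* Vectors of CV are functions V -> C (coordinates in the basis V);
   linear endomorphisms are V x V matrices: M u v = coefficient of u in M(v). *)
Definition vecV := V -> C.
Definition linV := V -> V -> C.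
Definition basis_vec (u : V) : vecV := fun v => (u == v)%:R.
Definition lapply (M : linV) (x : vecV) : vecV := fun u => \sum_v M u v * x v.
Definition lcomp (M N : linV) : linV := fun u v => \sum_w M u w * N w v.
Definition lid : linV := fun u v => (u == v)%:R.

Definition sW (I : finType) (m : V -> V -> C) (tau : V -> {set I}) (i : I) : linV :=
  fun u v =>
    if i \in tau v then - (u == v)%:R
    else (u == v)%:R - (if i \in tau u then m u v else 0).

Definition is_Wrep (n : nat) (I : finType) (delta : I -> 'rV[R]_n)
    (m : V -> V -> C) (tau : V -> {set I}) (rho : 'M[R]_n -> linV) : Prop :=
  [/\ rho 1%:M = lid,
      (forall g h, Wgrp delta g -> Wgrp delta h -> rho (g *m h) = lcomp (rho g) (rho h)) &
      (forall i, rho (refl_mx (delta i)) = sW m tau i)].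

Definition weak_Wgraph (n : nat) (I : finType) (delta : I -> 'rV[R]_n)
    (m : V -> V -> C) (tau : V -> {set I}) : Prop :=
  exists rho, is_Wrep delta m tau rho.

Definition VAminus (I : finType) (tau : V -> {set I}) (A : {set I}) : {set V} :=
  [set v | A \subset tau v].
Definition VAzero (I : finType) (tau : V -> {set I}) (A : {set I}) : {set V} :=
  [set v | (A :&: tau v != set0) && ~~ (A \subset tau v)].
Definition VAplus (I : finType) (tau : V -> {set I}) (A : {set I}) : {set V} :=
  [set v | A :&: tau v == set0].

Definition in_span (S : {set V}) (x : vecV) : Prop :=
  exists c : V -> C, forall v, x v = \sum_(u in S) c u * basis_vec u v.

End WGraph.

(* For alpha in A, the matrix of s_alpha has an entry m(u, v) off the
   diagonal only when alpha lies in tau(u) but not in tau(v).  Then v is not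
   in V(A,-), whereas tau(u) meets A and so u lies in V(A,-) u V(A,0); hence
   both subspaces are s_alpha-stable.  Since the generators of W(A) are
   involutions, every element of W(A) is a product of generators, and rho
   maps it to the corresponding product of stable operators. *)
From HB Require Import structures.
From mathcomp Require Import all_boot all_order all_algebra.
From mathcomp Require Import reals complex.
Set Implicit Arguments. Unset Strict Implicit. Unset Printing Implicit Defensive.
Import Order.TTheory GRing.Theory Num.Theory.
Local Open Scope ring_scope.

Lemma invmxM (R : comUnitRingType) n (g h : 'M[R]_n) :
  g \in unitmx -> h \in unitmx -> invmx (g *m h) = invmx h *m invmx g.
Proof.
move=> gu hu.
have ghu : g *m h \in unitmx by rewrite unitmx_mul gu hu.
have E : (g *m h) *m (invmx h *m invmx g) = 1%:M.
  by rewrite mulmxA -(mulmxA g) mulmxV // mulmx1 mulmxV.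
by rewrite -[LHS]mulmx1 -E mulmxA mulVmx // mul1mx.
Qed.

Section ReflectionGroups.
Variables (R : realType) (n : nat).
Implicit Types a : 'rV[R]_n.

Lemma dot_self_neq0 a : a != 0 -> dot a a != 0.
Proof.
apply: contraNneq => aa0; apply/eqP/rowP => j; rewrite mxE.
have dotE : dot a a = \sum_(k < n) a 0 k ^+ 2.
  by rewrite /dot mxE; apply: eq_bigr => k _; rewrite mxE expr2.
have /psumr_eq0P aj0 : \sum_(k < n) a 0 k ^+ 2 = 0 by rewrite -dotE.
by apply/eqP; rewrite -sqrf_eq0 aj0 // => k _; rewrite sqr_ge0.
Qed.

Lemma refl_mxE a : refl_mx a = 1%:M - (2 / dot a a) *: (a^T *m a).
Proof.
apply/matrixP => i j; rewrite /refl_mx /lin1_mx mxE /refl !mxE.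
have -> : dot 'e_i a = a 0 i by rewrite /dot -rowE !mxE.
rewrite big_ord1 !mxE eqxx eq_sym.
by congr (_ - _); rewrite !mulrA (mulrAC 2).
Qed.

Lemma refl_mx_invol a : a != 0 -> refl_mx a *m refl_mx a = 1%:M.
Proof.
move=> /dot_self_neq0 aa0; rewrite refl_mxE.
set k := 2 / dot a a; set P := a^T *m a.
have PP : P *m P = dot a a *: P.
  rewrite /P mulmxA -(mulmxA a^T a) (mx11_scalar (a *m a^T)).
  by rewrite mul_mx_scalar -scalemxAl.
rewrite mulmxBl mul1mx mulmxBr mulmx1 -scalemxAl -scalemxAr PP !scalerA.
have -> : k * k * dot a a = k *+ 2 by rewrite -mulrA /k divfK // mulr_natr.
by rewrite -scalerMnl mulr2n opprB addrK subrK.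
Qed.

Lemma gen_grp_invol_ind (S Q : 'M[R]_n -> Prop) :
  (forall g, S g -> g *m g = 1%:M) ->
  Q 1%:M -> (forall g, S g -> Q g) ->
  (forall g h, Q g -> Q h -> Q (g *m h)) ->
  forall w, gen_grp S w -> Q w.
Proof.
move=> Sinvol Q1 QS QM w Sw.
suff [] : [/\ w \in unitmx, Q w & Q (invmx w)] by [].
elim: Sw => {w} [|g Sg|g h _ [gu Qg Qg'] _ [hu Qh Qh']|g _ [gu Qg Qg']].
- by rewrite unitmx1 invmx1.
- have gg1 := Sinvol g Sg; have [gu _] := mulmx1_unit gg1.
  have -> : invmx g = g by rewrite -[LHS]mulmx1 -gg1 mulmxA mulVmx // mul1mx.
  by split => //; apply: QS.
- by rewrite unitmx_mul gu hu invmxM //; split => //; apply: QM.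
- by rewrite unitmx_inv invmxK.
Qed.

End ReflectionGroups.

Section StableSpan.
Variables (R : realType) (V : finType).

Definition stable_span (S : {set V}) (M : linV R V) : Prop :=
  forall u v, u \notin S -> v \in S -> M u v = 0.

Lemma in_spanP (S : {set V}) (x : vecV R V) :
  in_span S x <-> (forall v, v \notin S -> x v = 0).
Proof.
have basisE u v : u \in S -> v \notin S -> basis_vec R u v = 0.
  by move=> uS vS; apply/eqP; rewrite pnatr_eq0 eqb0; apply: contraNneq vS => <-.
split=> [[c xE] v vS | x0].
  by rewrite xE big1 // => u uS; rewrite basisE ?mulr0.
exists x => v; have [vS | vS] := boolP (v \in S); last first.
  by rewrite x0 // big1 // => u uS; rewrite basisE ?mulr0.
rewrite (bigD1 v) //= /basis_vec eqxx mulr1 big1 ?addr0 // => u /andP[_ uv].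
by rewrite (negbTE uv) mulr0.
Qed.

Lemma stable_span_lapply S M x :
  stable_span S M -> in_span S x -> in_span S (lapply M x).
Proof.
move=> SM /in_spanP x0; apply/in_spanP => u uS.
rewrite /lapply big1 // => v _; have [vS | vS] := boolP (v \in S).
  by rewrite SM // mul0r.
by rewrite x0 // mulr0.
Qed.

Lemma stable_span_lid S : stable_span S (@lid R V).
Proof. by move=> u v uS vS; rewrite /lid; case: eqP => // uv; rewrite uv vS in uS. Qed.

Lemma stable_span_lcomp S M N :
  stable_span S M -> stable_span S N -> stable_span S (lcomp M N).
Proof.
move=> SM SN u v uS vS; rewrite /lcomp big1 // => w _.
by have [wS | wS] := boolP (w \in S); [rewrite SM ?mul0r | rewrite SN ?mulr0].
Qed.

Lemma stable_span_sW (I : finType) (m : V -> V -> R[i]) (tau : V -> {set I}) i (S : {set V}) :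
  (forall u v, u \notin S -> v \in S -> i \in tau u -> i \in tau v) ->
  stable_span S (sW m tau i).
Proof.
move=> tauS u v uS vS; rewrite /sW.
have -> : (u == v) = false by apply: contraNF uS => /eqP->.
rewrite oppr0; case: ifPn => // ivN.
by case: ifPn => [/(tauS u v uS vS) iv | _]; [rewrite iv in ivN | rewrite subr0].
Qed.

Variables (I : finType) (m : V -> V -> R[i]) (tau : V -> {set I}) (A : {set I}).

Lemma stable_span_sW_VAminus i : i \in A -> stable_span (VAminus tau A) (sW m tau i).
Proof.
by move=> iA; apply: stable_span_sW => u v _; rewrite inE => /subsetP/(_ i iA).
Qed.

Lemma stable_span_sW_VAminus_zero i :
  i \in A -> stable_span (VAminus tau A :|: VAzero tau A) (sW m tau i).
Proof.
move=> iA; apply: stable_span_sW => u v + _ iu.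
rewrite !inE negb_or => /andP[Au]; rewrite Au andbT negbK => /eqP/setP/(_ i).
by rewrite !inE iA iu.
Qed.

End StableSpan.

Theorem proposition2p5 (R : realType) (n : nat) (Phi : seq 'rV[R]_n)
    (I : finType) (delta : I -> 'rV[R]_n) (V : finType)
    (m : V -> V -> R[i]) (tau : V -> {set I}) (rho : 'M[R]_n -> linV R V)
    (A : {set I}) :
  is_root_system Phi ->
  is_simple_system Phi delta ->
  is_Wrep delta m tau rho ->
  forall w : 'M[R]_n, WA delta A w ->
    (forall x : vecV R V, in_span (VAminus tau A) x ->
        in_span (VAminus tau A) (lapply (rho w) x)) /\
    (forall x : vecV R V, in_span (VAminus tau A :|: VAzero tau A) x ->
        in_span (VAminus tau A :|: VAzero tau A) (lapply (rho w) x)).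
Proof.
move=> [Phi0 _ _ _ _] [_ deltaPhi _ _] [rho1 rhoM rhoS] w WAw.
pose stable (M : linV R V) :=
  stable_span (VAminus tau A) M /\ stable_span (VAminus tau A :|: VAzero tau A) M.
suff [_ [stable1 stable2]] : Wgrp delta w /\ stable (rho w).
  by split=> x; apply: stable_span_lapply.
apply: (gen_grp_invol_ind (Q := fun g => Wgrp delta g /\ stable (rho g)) _ _ _ _ WAw)
  => [g [i _ ->]| | g [i iA ->] | g h [Wg [g1 g2]] [Wh [h1 h2]]].
- apply: refl_mx_invol; apply: contraNneq Phi0 => <-; exact: deltaPhi.
- by rewrite rho1; split; [exact: gen_one | split; apply: stable_span_lid].
- rewrite rhoS; split; first by apply: gen_el; exists i.
  by split; [apply: stable_span_sW_VAminus | apply: stable_span_sW_VAminus_zero].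
- rewrite rhoM //; split; first exact: gen_mul.
  by split; apply: stable_span_lcomp.
Qed.
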